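(* For every integer $n\geq 1$, $$\sum_{k=1}^{n}\bar B_{2k}\bar B_{2n-2k}=\frac{1}{n+1}\sum_{k=1}^{n}B_{2k}\bar B_{2n-2k}\binom{2n+2}{2k+2}+2n\bar B_{2n}.$$
   Context: $B_n$ denotes the Bernoulli numbers, defined by $\frac{x}{e^x-1}=\sum_{n\ge 0}B_n\frac{x^n}{n!}$ (so $B_0=1$). $\bar B_n:=\frac{1-2^{n-1}}{2^{n-1}}B_n$ (so $\bar B_0=1$). *)

From mathcomp Require Import all_boot all_order all_algebra.
Set Implicit Arguments. Unset Strict Implicit. Unset Printing Implicit Defensive.
Import Order.TTheory GRing.Theory Num.Theory.
Local Open Scope ring_scope.

(* Bernoulli numbers (B_1 = -1/2 convention, from x/(e^x-1)), computed by
   the recurrence obtained by comparing coefficients in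
   ((e^x - 1)/x) * (sum_n B_n x^n/n!) = 1, i.e.
   sum_(k <= n) C(n+1,k) B_k = 0 for n >= 1, B_0 = 1. *)
Fixpoint bern_list (n : nat) : seq rat :=
  match n with
  | 0%N => [:: 1]
  | m.+1 =>
      let l := bern_list m in
      rcons l (- (m.+2%:R)^-1 * \sum_(k < m.+2) 'C(m.+2, k)%:R * l`_k)
  end.

Definition bernoulli (n : nat) : rat := (bern_list n)`_n.

Definition bernoulli_bar (n : nat) : rat :=
  (1 - (2%:Q) ^ (n%:Z - 1)) / (2%:Q) ^ (n%:Z - 1) * bernoulli n.

From mathcomp Require Import all_boot all_order all_algebra.
From mathcomp Require Import ring zify.

Set Implicit Arguments.
Unset Strict Implicit.
Unset Printing Implicit Defensive.

Import GRing.Theory Num.Theory.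
Local Open Scope ring_scope.

(* The convolution S_m = sum_(p <= m) B_p(x) B_(m-p)(x) of Bernoulli
   polynomials satisfies S_(m+1)' = (m+2) S_m, so, like any such sequence, it
   is determined by S_0 and the integrals over [0, 1]; this yields the
   expansion S_m = sum_r C(m+1, r+1) (int_0^1 S_r) B_(m-r) in the Bernoulli
   basis.  Integration by parts gives int_0^1 B_p B_q =
   (-1)^(p-1) B_(p+q) / C(p+q, p), and an alternating sum of reciprocal
   binomial coefficients then gives int_0^1 S_(2k) = B_(2k) / (k+1).
   Evaluating the expansion at x = 1/2, where B_p(1/2) = \bar B_p by the
   duplication formula and vanishes for odd p by the reflection formula,
   leaves exactly the stated identity. *)

Section BinomialReciprocals.

Variable F : numFieldType.

Lemma natrS_neq0 n : (n.+1%:R : F) != 0.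
Proof. by rewrite pnatr_eq0. Qed.

Lemma binomial_div_succ m k :
  ('C(m, k)%:R / k.+1%:R : F) = 'C(m.+1, k.+1)%:R / m.+1%:R.
Proof.
apply/eqP; rewrite eqr_div ?natrS_neq0 // -!natrM mulnC.
by rewrite (mul_bin_diag m.+1 k) mulnC.
Qed.

Lemma inv_binomial_rec m i : (i <= m)%N ->
  ('C(m, i)%:R : F)^-1 =
  m.+1%:R / m.+2%:R * (('C(m.+1, i)%:R)^-1 + ('C(m.+1, i.+1)%:R)^-1).
Proof.
move=> le_im.
have c0 : ('C(m, i)%:R : F) != 0 by rewrite pnatr_eq0 -lt0n bin_gt0.
have mi0 : ((m.+1 - i)%:R : F) != 0 by rewrite pnatr_eq0 subn_eq0 -ltnNge ltnS.
have -> : ('C(m.+1, i)%:R : F) = m.+1%:R * 'C(m, i)%:R / (m.+1 - i)%:R.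
  by rewrite -natrM (mul_bin_down m.+1 i) natrM mulrC mulKf.
have -> : ('C(m.+1, i.+1)%:R : F) = m.+1%:R * 'C(m, i)%:R / i.+1%:R.
  by rewrite -natrM (mul_bin_diag m.+1 i) natrM mulrC mulKf ?natrS_neq0.
have -> : (m.+2%:R : F) = (m.+1 - i)%:R + i.+1%:R.
  by rewrite -natrD; congr _%:R; lia.
field.
by rewrite !nat1r -natrD addnS c0 mi0 !natrS_neq0.
Qed.

Lemma sum_alternating_inv_binomial m :
  \sum_(i < m.+1) (-1) ^+ i / ('C(m, i)%:R : F) =
  m.+1%:R / m.+2%:R * (1 + (-1) ^+ m).
Proof.
pose u i : F := (-1) ^+ i / 'C(m.+1, i)%:R.
have -> : \sum_(i < m.+1) (-1) ^+ i / ('C(m, i)%:R : F) =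
          m.+1%:R / m.+2%:R * - \sum_(0 <= i < m.+1) (u i.+1 - u i).
  rewrite big_mkord -sumrN mulr_sumr; apply: eq_bigr => i _.
  rewrite inv_binomial_rec; last by rewrite -ltnS.
  by rewrite /u exprS; ring.
by rewrite telescope_sumr // /u bin0 binn !divr1 exprS; ring.
Qed.

Lemma sum_alternating_inv_binomial_interior m :
  \sum_(i < m.+1) (-1) ^+ i / ('C(m.+2, i.+1)%:R : F) =
  (1 + (-1) ^+ m) / m.+4%:R.
Proof.
have := sum_alternating_inv_binomial m.+2.
rewrite big_ord_recl big_ord_recr /= bin0 binn !divr1 expr0.
under eq_bigr do rewrite /bump /= add1n exprS mulN1r mulNr.
rewrite sumrN -signr_odd /= negbK signr_odd.
set s := \sum_(i < m.+1) _ => sumE.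
have -> : s = 1 + (-1) ^+ m - (1 + (- s + (-1) ^+ m)) by ring.
by rewrite sumE; field; rewrite -natrD pnatr_eq0.
Qed.

Lemma binomial_div_succ_double m k :
  ('C((2 * m).+1, (2 * k).+1)%:R / k.+1%:R : F) =
  'C(2 * m + 2, 2 * k + 2)%:R / m.+1%:R.
Proof.
have two j : ((2 * j).+2%:R : F) = 2 * j.+1%:R by rewrite -natrM mulnS.
have := binomial_div_succ (2 * m).+1 (2 * k).+1.
rewrite !addn2 !two !invfM !mulrA ![_ * 2^-1 * _]mulrAC.
by move/(mulIf _); apply; rewrite invr_eq0 (natrS_neq0 1).
Qed.

End BinomialReciprocals.

Lemma sum_even_terms (V : nmodType) n (f : nat -> V) :
  (forall i, (i <= 2 * n)%N -> odd i -> f i = 0) ->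
  \sum_(i < (2 * n).+1) f i = \sum_(k < n.+1) f (2 * k)%N.
Proof.
elim: n => [|n IHn] f_odd; first by rewrite !big_ord1.
rewrite [in RHS]big_ord_recr -IHn => [|i le_i]; last by apply: f_odd; lia.
have -> : (2 * n.+1 = (2 * n).+2)%N by rewrite mulnS.
rewrite [LHS]big_ord_recr [in LHS]big_ord_recr /= (f_odd (2 * n).+1) ?addr0 //.
  by lia.
by rewrite /= oddM.
Qed.

Section IntegralOverUnitInterval.

Variable F : numFieldType.
Implicit Types (p q : {poly F}) (a b : F).

Lemma deriv_eq0_polyC p : p^`() = 0 -> p = (p`_0)%:P.
Proof.
move=> dp0; apply/polyP => -[|i]; rewrite coefC //=.
have /eqP := congr1 (fun r : {poly F} => r`_i) dp0.
by rewrite coef_deriv coef0 -mulr_natr mulf_eq0 pnatr_eq0 orbF => /eqP.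
Qed.

Lemma eq_deriv_hornerB p q a b :
  p^`() = q^`() -> p.[a] - p.[b] = q.[a] - q.[b].
Proof.
move=> dpq; have /deriv_eq0_polyC dpq0 : (p - q)^`() = 0.
  by rewrite derivB dpq subrr.
have : (p - q).[a] = (p - q).[b] by rewrite dpq0 !hornerC.
rewrite !hornerE => /eqP; rewrite -subr_eq0 => /eqP dab.
by apply/eqP; rewrite -subr_eq0 -dab; apply/eqP; ring.
Qed.

Definition antideriv p : {poly F} :=
  \poly_(i < (size p).+1) (if i is j.+1 then p`_j / i%:R else 0).

Lemma antiderivK p : (antideriv p)^`() = p.
Proof.
apply/polyP => i; rewrite coef_deriv coef_poly ltnS.
case: ltnP => [_|/(nth_default 0) ->]; last by rewrite mul0rn.
by rewrite -[LHS]mulr_natr divfK ?natrS_neq0.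
Qed.

Definition int01 p : F := (antideriv p).[1] - (antideriv p).[0].

Lemma int01_deriv p : int01 p^`() = p.[1] - p.[0].
Proof. by apply: eq_deriv_hornerB; rewrite antiderivK. Qed.

Lemma int01D p q : int01 (p + q) = int01 p + int01 q.
Proof.
rewrite /int01 (@eq_deriv_hornerB _ (antideriv p + antideriv q)) ?hornerD.
  by ring.
by rewrite derivD !antiderivK.
Qed.

Lemma int01Z a p : int01 (a *: p) = a * int01 p.
Proof.
rewrite /int01 (@eq_deriv_hornerB _ (a *: antideriv p)) ?hornerZ.
  by ring.
by rewrite derivZ !antiderivK.
Qed.

Lemma int010 : int01 0 = 0.
Proof. by rewrite -(scale0r 0) int01Z mul0r. Qed.

Lemma int01B p q : int01 (p - q) = int01 p - int01 q.
Proof. by rewrite -scaleN1r int01D int01Z mulN1r. Qed.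

Lemma int01_sum I (r : seq I) (P : pred I) (f : I -> {poly F}) :
  int01 (\sum_(i <- r | P i) f i) = \sum_(i <- r | P i) int01 (f i).
Proof. exact: (big_morph int01 int01D int010). Qed.

Lemma int01C a : int01 a%:P = a.
Proof.
have -> : a%:P = (a *: 'X)^`() by rewrite derivZ derivX alg_polyC.
by rewrite int01_deriv !hornerZ !hornerX mulr1 mulr0 subr0.
Qed.

Lemma deriv_comp_affine p a b :
  (p \Po (a *: 'X + b%:P))^`() = a *: (p^`() \Po (a *: 'X + b%:P)).
Proof.
by rewrite deriv_comp derivD derivZ derivX derivC addr0 alg_polyC mulrC mul_polyC.
Qed.

Lemma int01_comp_affine p a b : a != 0 ->
  int01 (p \Po (a *: 'X + b%:P)) =
  ((antideriv p).[a + b] - (antideriv p).[b]) / a.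
Proof.
move=> a0; rewrite -{1}[p]antiderivK.
have -> : (antideriv p)^`() \Po (a *: 'X + b%:P) =
          a^-1 *: (antideriv p \Po (a *: 'X + b%:P))^`().
  by rewrite deriv_comp_affine scalerA mulVf ?scale1r.
by rewrite int01Z int01_deriv !horner_comp !hornerE mulrC.
Qed.

Lemma appell_unique (P Q : nat -> {poly F}) (c : nat -> F) :
  P 0 = Q 0 ->
  (forall m, (P m.+1)^`() = c m *: P m) ->
  (forall m, (Q m.+1)^`() = c m *: Q m) ->
  (forall m, int01 (P m) = int01 (Q m)) -> P =1 Q.
Proof.
move=> PQ0 dP dQ intPQ; elim=> // m IHm.
have /deriv_eq0_polyC PQm : (P m.+1 - Q m.+1)^`() = 0.
  by rewrite derivB dP dQ IHm subrr.
have : int01 (P m.+1 - Q m.+1) = 0 by rewrite int01B intPQ subrr.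
rewrite PQm int01C => PQm0; move: PQm; rewrite PQm0 => /eqP.
by rewrite subr_eq0 => /eqP.
Qed.

End IntegralOverUnitInterval.

Lemma size_bern_list m : size (bern_list m) = m.+1.
Proof. by elim: m => [|m IHm] //=; rewrite size_rcons IHm. Qed.

Lemma nth_bern_list m k : (k <= m)%N -> (bern_list m)`_k = bernoulli k.
Proof.
elim: m => [|m IHm]; first by rewrite leqn0 => /eqP ->.
rewrite leq_eqVlt => /predU1P[-> //|ltkm].
by rewrite /= nth_rcons size_bern_list ltkm IHm.
Qed.

Lemma bernoulli0 : bernoulli 0 = 1.
Proof. by []. Qed.

Lemma bernoulli_rec m : \sum_(k < m.+2) 'C(m.+2, k)%:R * bernoulli k = 0.
Proof.
have Bm : bernoulli m.+1 = - (m.+2%:R)^-1 *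
    \sum_(k < m.+1) 'C(m.+2, k)%:R * bernoulli k.
  rewrite /bernoulli /= nth_rcons size_bern_list ltnn eqxx.
  rewrite big_ord_recr /= nth_default ?size_bern_list // mulr0 addr0.
  by congr (_ * _); apply: eq_bigr => i _; rewrite nth_bern_list // -ltnS.
rewrite big_ord_recr /= Bm binSn mulrA mulrN divff ?natrS_neq0 //.
by rewrite mulN1r addrN.
Qed.

Definition bernpoly (p : nat) : {poly rat} :=
  \sum_(k < p.+1) ('C(p, k)%:R * bernoulli k) *: 'X^(p - k).

Lemma bernpoly0 : bernpoly 0 = 1.
Proof. by rewrite /bernpoly big_ord1 subnn bin0 bernoulli0 mulr1 scale1r. Qed.

Lemma bernpoly_at0 p : (bernpoly p).[0] = bernoulli p.
Proof.
rewrite /bernpoly horner_sum big_ord_recr /= big1 ?add0r => [|i _].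
  by rewrite hornerZ hornerXn subnn expr0 mulr1 binn mul1r.
by rewrite hornerZ hornerXn expr0n subn_eq0 leqNgt ltn_ord mulr0.
Qed.

Lemma bernpoly_at1B p : (bernpoly p).[1] - (bernpoly p).[0] = (p == 1)%:R.
Proof.
have -> : (bernpoly p).[1] = \sum_(k < p.+1) 'C(p, k)%:R * bernoulli k.
  by rewrite /bernpoly horner_sum; apply: eq_bigr => i _;
    rewrite hornerZ hornerXn expr1n mulr1.
rewrite bernpoly_at0; case: p => [|[|m]].
- by rewrite big_ord1 subrr.
- by rewrite big_ord_recr big_ord1 /= bin0 binn !mul1r addrK.
- by rewrite big_ord_recr /= bernoulli_rec add0r binn mul1r subrr.
Qed.

Lemma deriv_bernpoly p : (bernpoly p.+1)^`() = p.+1%:R *: bernpoly p.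
Proof.
rewrite /bernpoly raddf_sum big_ord_recr /= subnn derivZ derivXn mulr0n.
rewrite scaler0 addr0 scaler_sumr; apply: eq_bigr => i _.
have lt_ip : (i <= p)%N by rewrite -ltnS.
rewrite derivZ derivXn subSn //= -scaler_nat !scalerA; congr (_ *: _).
have := mul_bin_down p.+1 i; rewrite /= subSn // => binE.
by rewrite mulrAC -natrM mulnC -binE natrM mulrA.
Qed.

Lemma int01_bernpoly p : int01 (bernpoly p) = (p == 0)%:R.
Proof.
case: p => [|p]; first by rewrite bernpoly0 -polyC1 int01C.
have -> : bernpoly p.+1 = (p.+2%:R)^-1 *: (bernpoly p.+2)^`().
  by rewrite deriv_bernpoly scalerA mulVf ?natrS_neq0 ?scale1r.
by rewrite int01Z int01_deriv bernpoly_at1B mulr0.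
Qed.

Lemma bernpoly_appell (P : nat -> {poly rat}) :
  P 0 = 1 -> (forall m, (P m.+1)^`() = m.+1%:R *: P m) ->
  (forall m, int01 (P m) = (m == 0)%:R) -> P =1 bernpoly.
Proof.
move=> P0 dP intP; apply: (appell_unique (c := fun m => m.+1%:R)) => //.
- by rewrite bernpoly0.
- exact: deriv_bernpoly.
- by move=> m; rewrite intP int01_bernpoly.
Qed.

Lemma bernpoly_reflect p : bernpoly p \Po (1 - 'X) = (-1) ^+ p *: bernpoly p.
Proof.
have reflE : 1 - 'X = (-1 : rat) *: 'X + 1%:P by rewrite scaleN1r addrC.
pose P m := (-1) ^+ m *: (bernpoly m \Po (1 - 'X)).
have PE : P p = bernpoly p.
  apply: bernpoly_appell => [|m|m]; rewrite /P reflE.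
  - by rewrite expr0 scale1r bernpoly0 -polyC1 comp_polyC.
  - rewrite derivZ deriv_comp_affine deriv_bernpoly comp_polyZ !scalerA.
    by congr (_ *: _); rewrite exprS mulN1r mulrN1 opprK mulrC.
  - rewrite int01Z int01_comp_affine ?oppr_eq0 ?oner_eq0 // addNr invrN1.
    rewrite mulrN1 opprB -[_ - _]/(int01 (bernpoly m)) int01_bernpoly.
    by case: m => [|m]; rewrite ?expr0 ?mul1r ?mulr0.
by rewrite -{2}PE /P scalerA -exprMn mulrNN mulr1 expr1n scale1r.
Qed.

Lemma bernpoly_duplication p :
  (2 ^+ p / 2) *: ((bernpoly p \Po (2^-1 *: 'X)) +
                   (bernpoly p \Po (2^-1 *: 'X + (2^-1)%:P))) = bernpoly p.
Proof.
pose P m := (2 ^+ m / 2) *: ((bernpoly m \Po (2^-1 *: 'X + 0%:P)) +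
                             (bernpoly m \Po (2^-1 *: 'X + (2^-1)%:P))).
have PE : P p = bernpoly p.
  apply: bernpoly_appell => [|m|m]; rewrite /P.
  - rewrite bernpoly0 -polyC1 !comp_polyC -mul_polyC.
    by rewrite -polyCD -polyCM expr0 mul1r mulVf.
  - rewrite derivZ derivD !deriv_comp_affine deriv_bernpoly !comp_polyZ.
    by rewrite !scalerA -scalerDr scalerA exprS; congr (_ *: _); field.
  - rewrite int01Z int01D !int01_comp_affine ?invr_eq0 // addr0.
    have -> : (2 : rat)^-1 + 2^-1 = 1 by field.
    set A := antideriv _.
    have -> : 2 ^+ m / 2 * ((A.[2^-1] - A.[0]) / 2^-1 + (A.[1] - A.[2^-1]) / 2^-1)
              = 2 ^+ m * int01 (bernpoly m) by rewrite /int01 -/A; field.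
    by rewrite int01_bernpoly; case: (m) => [|k]; rewrite ?expr0 ?mul1r ?mulr0.
by rewrite -[RHS]PE /P polyC0 addr0.
Qed.

Lemma bernpoly_half p : (bernpoly p).[2^-1] = bernoulli_bar p.
Proof.
have := congr1 (horner^~ 0) (bernpoly_duplication p).
rewrite hornerZ hornerD !horner_comp !hornerE bernpoly_at0 => dup.
have two_p : (2 : rat) ^+ p != 0 by rewrite expf_neq0.
have -> : (bernpoly p).[2^-1] =
    2 / 2 ^+ p * (2 ^+ p / 2 * (bernoulli p + (bernpoly p).[2^-1])) - bernoulli p.
  by field.
by rewrite dup /bernoulli_bar expfzDr // exprN1 -exprnP; field.
Qed.

Lemma bernoulli_bar0 : bernoulli_bar 0 = 1.
Proof. by rewrite -bernpoly_half bernpoly0 hornerC. Qed.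

Lemma bernoulli_bar_odd p : odd p -> bernoulli_bar p = 0.
Proof.
move=> odd_p; have := congr1 (horner^~ 2^-1) (bernpoly_reflect p).
rewrite horner_comp hornerZ !hornerE -signr_odd odd_p expr1 mulN1r.
have -> : (1 - 2^-1 : rat) = 2^-1 by field.
rewrite bernpoly_half => /eqP; rewrite -subr_eq0 opprK -mulr2n.
by rewrite -mulr_natr mulf_eq0 pnatr_eq0 orbF => /eqP.
Qed.

Lemma int01_bernpolyM_rec p q :
  p.+1%:R * int01 (bernpoly p * bernpoly q.+2) +
  q.+2%:R * int01 (bernpoly p.+1 * bernpoly q.+1) = (p == 0)%:R * bernoulli q.+2.
Proof.
have ends : (bernpoly q.+2).[1] = (bernpoly q.+2).[0].
  by apply/eqP; rewrite -subr_eq0 bernpoly_at1B.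
have := int01_deriv (bernpoly p.+1 * bernpoly q.+2).
rewrite derivM !deriv_bernpoly -scalerAl -scalerAr int01D !int01Z => ->.
by rewrite !hornerM ends -mulrBl bernpoly_at1B bernpoly_at0.
Qed.

Lemma int01_bernpolyM p q :
  int01 (bernpoly p.+1 * bernpoly q.+1) =
  (-1) ^+ p * bernoulli (p + q).+2 / 'C((p + q).+2, p.+1)%:R.
Proof.
elim: p q => [|p IHp] q.
  have := int01_bernpolyM_rec 0 q.
  rewrite bernpoly0 mul1r int01_bernpoly mulr0 add0r mul1r => intE.
  apply: (@mulfI _ q.+2%:R); first exact: natrS_neq0.
  by rewrite intE add0n bin1 mulrCA divff ?natrS_neq0 ?mulr1.
have := int01_bernpolyM_rec p.+1 q; rewrite IHp mul0r => intE.
rewrite !addSn !addnS in intE *.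
have binE : ('C((p + q).+3, p.+2)%:R : rat) =
            q.+2%:R * 'C((p + q).+3, p.+1)%:R / p.+2%:R.
  have := mul_bin_left (p + q).+3 p.+1.
  rewrite (_ : (p + q).+3 - p.+1 = q.+2)%N; last by lia.
  move=> /(congr1 (fun k => k%:R : rat)); rewrite !natrM => <-.
  by rewrite mulrC mulKf ?natrS_neq0.
have bin0 : ('C((p + q).+3, p.+1)%:R : rat) != 0.
  by rewrite pnatr_eq0 -lt0n bin_gt0; lia.
apply: (@mulfI _ q.+2%:R); first exact: natrS_neq0.
have -> : q.+2%:R * int01 (bernpoly p.+2 * bernpoly q.+1) =
          - (p.+2%:R * ((-1) ^+ p * bernoulli (p + q).+3 /
                        'C((p + q).+3, p.+1)%:R)).
  by apply/eqP; rewrite -addr_eq0 addrC intE.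
rewrite binE exprS; field.
by rewrite bin0 -!natrD !pnatr_eq0.
Qed.

Definition bernconv (m : nat) : {poly rat} :=
  \sum_(p < m.+1) bernpoly p * bernpoly (m - p).

Lemma bernconv0 : bernconv 0 = 1.
Proof. by rewrite /bernconv big_ord1 bernpoly0 mulr1. Qed.

Lemma deriv_bernconv m : (bernconv m.+1)^`() = m.+2%:R *: bernconv m.
Proof.
have dB p : (bernpoly p)^`() = p%:R *: bernpoly p.-1.
  by case: p => [|p]; rewrite ?deriv_bernpoly // bernpoly0 -polyC1 derivC scale0r.
rewrite /bernconv raddf_sum /=.
under eq_bigr => i _ do rewrite derivM !dB.
rewrite big_split /= big_ord_recl [X in _ + X]big_ord_recr /= !mulr0n !scale0r.
rewrite mul0r add0r subnn scale0r mulr0 addr0 -big_split scaler_sumr /=.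
apply: eq_bigr => i _; have le_im : (i <= m)%N by rewrite -ltnS.
rewrite /bump /= add1n subSS subSn // -scalerAl -scalerAr -scalerDl -natrD.
by congr (_%:R *: _); lia.
Qed.

Lemma int01_bernconv_even k :
  int01 (bernconv (2 * k)) = bernoulli (2 * k) / k.+1%:R.
Proof.
case: k => [|j]; first by rewrite bernconv0 -polyC1 int01C bernoulli0 divr1.
have -> : (2 * j.+1 = (2 * j).+2)%N by rewrite mulnS.
rewrite /bernconv int01_sum big_ord_recl big_ord_recr /= /bump /=.
rewrite subn0 subnn bernpoly0 mul1r mulr1 !int01_bernpoly /= addr0 add0r.
rewrite (eq_bigr (fun i : 'I_(2 * j).+1 =>
    (-1) ^+ i / 'C((2 * j).+2, i.+1)%:R * bernoulli (2 * j).+2)) => [|i _].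
  rewrite -mulr_suml sum_alternating_inv_binomial_interior.
  have -> : (-1) ^+ (2 * j) = 1 :> rat by rewrite mulnC exprM sqrr_sign.
  have -> : ((2 * j).+4%:R : rat) = 2 * j.+2%:R by rewrite -natrM mulnS mulnS.
  by field; rewrite -natrD pnatr_eq0.
have le_ij : (i <= 2 * j)%N by rewrite -ltnS.
rewrite add1n subSS subSn // int01_bernpolyM subnKC //.
by rewrite mulrAC.
Qed.

Lemma bernconv_expand m :
  bernconv m =
  \sum_(r < m.+1) ('C(m.+1, r.+1)%:R * int01 (bernconv r)) *: bernpoly (m - r).
Proof.
pose Q m := \sum_(r < m.+1)
  ('C(m.+1, r.+1)%:R * int01 (bernconv r)) *: bernpoly (m - r).
change (bernconv m = Q m); move: m.
apply: (appell_unique (c := fun m => m.+2%:R)) => [|m|m|m]; rewrite /Q.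
- by rewrite big_ord1 bernconv0 bernpoly0 binn mul1r -polyC1 int01C scale1r.
- exact: deriv_bernconv.
- rewrite raddf_sum big_ord_recr /= subnn bernpoly0 derivZ -polyC1 derivC.
  rewrite scaler0 addr0 scaler_sumr; apply: eq_bigr => i _.
  have le_im : (i <= m)%N by rewrite -ltnS.
  rewrite derivZ subSn // deriv_bernpoly !scalerA; congr (_ *: _).
  have := mul_bin_down m.+2 i.+1; rewrite subSS /= subSn // => binE.
  by rewrite mulrAC -natrM mulnC -binE natrM mulrA.
- rewrite [RHS]int01_sum big_ord_recr /= subnn int01Z int01_bernpoly binn.
  rewrite mul1r mulr1 big1 ?add0r // => i _; rewrite int01Z int01_bernpoly.
  by rewrite subn_eq0 leqNgt ltn_ord mulr0.
Qed.

Lemma bernoulli_bar_convolution n :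
  \sum_(k < n.+1) bernoulli_bar (2 * k) * bernoulli_bar (2 * n - 2 * k) =
  \sum_(k < n.+1) 'C((2 * n).+1, (2 * k).+1)%:R * (bernoulli (2 * k) / k.+1%:R) *
                  bernoulli_bar (2 * n - 2 * k).
Proof.
have := congr1 (horner^~ 2^-1) (bernconv_expand (2 * n)).
rewrite /bernconv !horner_sum.
under eq_bigr do rewrite hornerM !bernpoly_half.
under [in X in _ = X -> _]eq_bigr do rewrite hornerZ bernpoly_half.
rewrite (sum_even_terms (f := fun i =>
  bernoulli_bar i * bernoulli_bar (2 * n - i))).
  rewrite (sum_even_terms (f := fun i =>
    'C((2 * n).+1, i.+1)%:R * int01 (bernconv i) * bernoulli_bar (2 * n - i))).
    by move=> ->; apply: eq_bigr => k _; rewrite int01_bernconv_even.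
  by move=> i le_i odd_i; rewrite bernoulli_bar_odd ?mulr0 // oddB // oddM odd_i.
by move=> i _ odd_i; rewrite bernoulli_bar_odd ?mul0r.
Qed.

Theorem mainTheorem8 (n : nat) (hn : (1 <= n)%N) :
  \sum_(1 <= k < n.+1) bernoulli_bar (2 * k) * bernoulli_bar (2 * n - 2 * k)
  = (n.+1%:R)^-1 *
      \sum_(1 <= k < n.+1)
        bernoulli (2 * k) * bernoulli_bar (2 * n - 2 * k) * 'C(2 * n + 2, 2 * k + 2)%:R
    + (2 * n)%:R * bernoulli_bar (2 * n).
Proof.
have := bernoulli_bar_convolution n.
rewrite !big_ord_recl /= muln0 subn0 bernoulli_bar0 bernoulli0 bin1 divr1 mul1r.
rewrite !big_add1 !big_mkord /bump /=.
have termE k :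
    'C((2 * n).+1, (2 * k).+1)%:R * (bernoulli (2 * k) / k.+1%:R) *
    bernoulli_bar (2 * n - 2 * k) =
    n.+1%:R^-1 * (bernoulli (2 * k) * bernoulli_bar (2 * n - 2 * k) *
                  'C(2 * n + 2, 2 * k + 2)%:R).
  by rewrite [_ * (_ / _)]mulrCA binomial_div_succ_double; ring.
under [in X in _ = X -> _]eq_bigr => i _ do rewrite add1n termE.
rewrite -mulr_sumr -natr1 => convE.
by apply: (addrI (bernoulli_bar (2 * n))); rewrite convE; ring.
Qed.
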